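(* Let $\mathcal{S}\subseteq\mathbb{S}^{d-1}$ with $|\mathcal{S}|=n$, and let $\mathcal{D}$ be a (randomized) linear-space bucket data structure for the $(\alpha,\beta)$-ANN problem on $\mathcal{S}$ in which each point of $\mathcal{S}$ is stored in at most one bucket. Fix a query $q\in\mathbb{S}^{d-1}$ and suppose that each point of $\mathcal{S}\cap B(q,\alpha)$ lies in a bucket inspected by $q$ with probability $1-o(1)$, and that the expected number of points of $\mathcal{S}\setminus B(q,\beta)$ lying in buckets inspected by $q$ is at most $n^{\rho+o(1)}$. Let $\widehat{\mathrm{ans}}$ be the sum, over the buckets inspected by $q$, of the number of points stored in the bucket. Then with probability at least $2/3$, $$(1-o(1))|\mathcal{S}\cap B(q,\alpha)|\le\widehat{\mathrm{ans}}\le|\mathcal{S}\cap B(q,\beta)|+n^{\rho+o(1)}.$$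
   Context: $\mathbb{S}^{d-1}$ is the unit sphere in $\mathbb{R}^d$, $B(q,\alpha)=\{x\in\mathbb{S}^{d-1}:\langle q,x\rangle\ge\alpha\}$, $0\le\beta<\alpha<1$. A bucket data structure stores points of $\mathcal{S}$ in buckets (e.g. of a hash table); a query $q$ determines a set of buckets it inspects, and the $(\alpha,\beta)$-ANN query scans the points in these buckets. The counting version replaces each bucket by the number of points stored in it and returns the sum of these counts over the inspected buckets. Asymptotic notation is as $n\to\infty$. *)

From HB Require Import structures.
From mathcomp Require Import all_boot all_order all_algebra.
From mathcomp Require Import all_classical all_reals all_analysis.
Set Implicit Arguments. Unset Strict Implicit. Unset Printing Implicit Defensive.
Import Order.TTheory GRing.Theory Num.Theory.
Local Open Scope ring_scope.

Definition dotp (R : realType) (d : nat) (x y : 'rV[R]_d) : R :=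
  \sum_(i < d) x ord0 i * y ord0 i.

Definition on_sphere (R : realType) (d : nat) (x : 'rV[R]_d) : Prop :=
  dotp x x = 1.

(* Membership in the cap B(q,a) = {x in S^{d-1} : <q,x> >= a}
   (only used for points already known to lie on the sphere). *)
Definition in_cap (R : realType) (d : nat) (q : 'rV[R]_d) (a : R) (x : 'rV[R]_d) : bool :=
  a <= dotp q x.

Definition found (T B P : Type) (store : T -> P -> B -> Prop) (insp : T -> set B)
  (w : T) (p : P) : Prop :=
  exists b, store w p b /\ insp w b.

Definition bucket_count (T B P : Type) (store : T -> P -> B -> Prop) (S : seq P)
  (w : T) (b : B) : nat :=
  count (fun p => `[< store w p b >]) S.

Definition ans_hat (R : realType) (T : Type) (B : choiceType) (P : Type)
  (store : T -> P -> B -> Prop) (insp : T -> set B) (S : seq P) (w : T) : \bar R :=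
  (\esum_(b in insp w) ((bucket_count store S w b)%:R : R)%:E)%E.
Arguments ans_hat {R T B P} store insp S w.

From HB Require Import structures.
From mathcomp Require Import all_boot all_order all_algebra.
From mathcomp Require Import all_classical all_reals all_analysis.
From mathcomp Require Import zify lra measurable_realfun.
Import Order.TTheory GRing.Theory Num.Theory.
Import numFieldNormedType.Exports.
Local Open Scope classical_set_scope.
Local Open Scope ring_scope.

(* Since every point is stored in at most one bucket, the counting answer is
   exactly the number of points found by the query.  It can fall below
   (1 - eps') |S ∩ B(q,alpha)| only if the number of missed near points, whose
   mean is at most eps |S ∩ B(q,alpha)|, exceeds six times that mean; and it
   can exceed |S ∩ B(q,beta)| + 6 K only if the number of found points outside
   B(q,beta), whose mean is at most K = n^(rho+delta), exceeds 6 K.  By Markov's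
   inequality each of these has probability at most 1/6, so both bounds hold
   with probability at least 2/3.  The factor 6 is absorbed into
   eps' = 6 |eps| + o(1) and, since n^(ln 6 / ln n) = 6, into
   delta' = delta + ln 6 / ln n. *)

Lemma count_le_add_predC (V : Type) (a f : pred V) (s : seq V) :
  (count a s <= count f s + count (fun x => ~~ f x && a x) s)%N.
Proof. by elim: s => //= x s; case: (a x); case: (f x) => /=; lia. Qed.

Lemma measurable_andb d (T : measurableType d) (c : bool) (E : T -> bool) :
  measurable [set w | E w] -> measurable [set w | c && E w].
Proof.
case: c => // _; rewrite (_ : [set _ | false] = set0); first exact: measurable0.
by apply/seteqP; split => w.
Qed.

Section count_of_events.
Context {d} {T : measurableType d} {R : realType} {mu : probability T R}.
Context {V : eqType} (E : V -> T -> bool).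

Lemma natr_indic (p : V) (w : T) : ((E p w)%:R : R) = \1_[set w | E p w] w.
Proof.
rewrite indicE; have [h|h] := boolP (E p w); first by rewrite mem_set.
by rewrite memNset ?(negbTE h) //; apply/negP.
Qed.

Lemma measurable_count (s : seq V) :
  (forall p, p \in s -> measurable [set w | E p w]) ->
  measurable_fun setT (fun w => (count (E^~ w) s)%:R : R).
Proof.
elim: s => [|x s IH] mE /=; first exact: measurable_cst.
under eq_fun => w do rewrite natrD natr_indic.
apply: measurable_funD; first exact/measurable_indic/mE/mem_head.
by apply: IH => p ps; apply: mE; rewrite inE ps orbT.
Qed.

Lemma integral_count_le (s : seq V) (e : R) :
  (forall p, p \in s -> measurable [set w | E p w]) ->
  (forall p, p \in s -> (mu [set w | E p w] <= e%:E)%E) ->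
  (\int[mu]_w ((count (E^~ w) s)%:R : R)%:E <= ((size s)%:R * e)%:E)%E.
Proof.
elim: s => [|x s IH] mE muE /=; first by rewrite integral0 mul0r.
have mE' p : p \in s -> measurable [set w | E p w].
  by move=> ps; apply: mE; rewrite inE ps orbT.
have muE' p : p \in s -> (mu [set w | E p w] <= e%:E)%E.
  by move=> ps; apply: muE; rewrite inE ps orbT.
under eq_integral => w _ do rewrite natrD natr_indic EFinD.
rewrite ge0_integralD //; last 2 first.
- exact/measurable_EFinP/measurable_indic/mE/mem_head.
- exact/measurable_EFinP/measurable_count.
rewrite integral_indic ?setIT //; last exact/mE/mem_head.
rewrite -add1n natrD mulrDl mul1r EFinD.
exact: leeD (muE _ (mem_head _ _)) (IH mE' muE').
Qed.

End count_of_events.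

Section probability_bounds.
Context {d} {T : measurableType d} {R : realType} (mu : probability T R).

Lemma markov_le (g : T -> R) (a K : R) : measurable_fun setT g ->
  (forall w, 0 <= g w) -> 0 < a -> (\int[mu]_w (g w)%:E <= K%:E)%E ->
  (mu [set w | (a <= g w)%R] <= (K / a)%:E)%E.
Proof.
move=> mg g0 a0 gK.
have := @le_integral_comp_abse _ T R mu setT measurableT (EFin \o g) a id
  (@measurable_id _ _ _) (fun x h => h) (fun x _ _ _ h => h)
  (proj2 (measurable_EFinP _ _) mg) a0.
rewrite setTI (_ : [set x | _] = [set w | (a <= g w)%R]); last first.
  by apply/seteqP; split => w /=; rewrite lee_fin ger0_norm.
under eq_integral => w _ do rewrite /= ger0_norm //.
move=> /le_trans /(_ gK) markov.
by rewrite mulrC EFinM lee_pdivlMl.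
Qed.

Lemma probability_setCI_ge (A1 A2 : set T) (a1 a2 : R) :
  measurable A1 -> measurable A2 ->
  (mu A1 <= a1%:E)%E -> (mu A2 <= a2%:E)%E ->
  ((1 - (a1 + a2))%:E <= mu (~` A1 `&` ~` A2))%E.
Proof.
move=> mA1 mA2 muA1 muA2.
rewrite -setCU probability_setC; last exact: measurableU.
rewrite EFinB EFinD leeB //.
exact: le_trans (measureU2 mu mA1 mA2) (leeD muA1 muA2).
Qed.

End probability_bounds.

Section ans_hat_found.
Context {R : realType} {T : Type} {B : choiceType} {V : Type}.
Context {store : T -> V -> B -> Prop} {insp : T -> set B} {w : T}.
Hypothesis store_uniq : forall p b1 b2, store w p b1 -> store w p b2 -> b1 = b2.

Lemma esum_store_found (p : V) :
  (\esum_(b in insp w) ((`[< store w p b >])%:R : R)%:E)%E =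
  ((`[< found store insp w p >])%:R : R)%:E.
Proof.
have [[b0 [pb0 ib0]]|nf] := pselect (found store insp w p); last first.
  rewrite asboolF //; apply: esum1 => b ib.
  by rewrite asboolF // => pb; apply: nf; exists b.
rewrite asboolT; last by exists b0.
transitivity (\esum_(b in insp w `&` [set b0]) (1%:R : R)%:E)%E.
  rewrite esum_mkcondr; apply: eq_esum => b _.
  have [->|nb] := pselect (b = b0); first by rewrite mem_set // asboolT.
  by rewrite memNset // asboolF // => pb; apply: nb; exact: store_uniq pb pb0.
by rewrite setIidr ?esum_set1 // => b ->.
Qed.

Lemma ans_hat_found_count (s : seq V) :
  ans_hat store insp s w = ((count (fun p => `[< found store insp w p >]) s)%:R : R)%:E.
Proof.
rewrite /ans_hat /bucket_count; elim: s => [|p s IH] /=; first exact: esum1.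
under eq_esum => b _ do rewrite natrD EFinD.
by rewrite esumD ?esum_store_found ?IH ?natrD ?EFinD // => b _; rewrite lee_fin.
Qed.

End ans_hat_found.

Section counting_answer.
Context {d} {T : measurableType d} {R : realType} {mu : probability T R}.
Context {B : choiceType} {V : eqType}.
Context {store : T -> V -> B -> Prop} {insp : T -> set B} {s : seq V}.
Hypothesis found_meas : forall p, p \in s -> measurable [set w | found store insp w p].

Local Notation is_found w p := `[< found store insp w p >].
Local Notation found_count w := ((count (fun p => is_found w p) s)%:R : R).

Let measurable_is_found p : p \in s -> measurable [set w | is_found w p].
Proof.
move=> ps; rewrite (_ : [set w | _] = [set w | found store insp w p]).
  exact: found_meas.
by apply/seteqP; split => w /asboolP.
Qed.

Let measurable_not_found p : p \in s -> measurable [set w | ~~ is_found w p].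
Proof.
move=> ps; rewrite (_ : [set w | _] = ~` [set w | found store insp w p]).
  exact/measurableC/found_meas.
by apply/seteqP; split => w /=; case: asboolP.
Qed.

Let measurable_found_count : measurable_fun setT (fun w => found_count w).
Proof. exact: measurable_count measurable_is_found. Qed.

Let measurable_found_count_lt (c : R) : measurable [set w | found_count w < c].
Proof.
rewrite -[X in measurable X]setTI -preimage_itvNyo.
exact: measurable_found_count measurableT _ (measurable_itv _).
Qed.

Let measurable_found_count_gt (c : R) : measurable [set w | c < found_count w].
Proof.
rewrite -[X in measurable X]setTI -preimage_itvoy.
exact: measurable_found_count measurableT _ (measurable_itv _).
Qed.

Lemma found_count_lower_tail (c : pred V) (e e' : R) :
  (forall p, p \in s -> c p ->
     ((1 - e)%:E <= mu [set w | found store insp w p])%E) ->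
  0 < e' -> 6 * e <= e' ->
  (mu [set w | (found_count w < (1 - e') * (count c s)%:R)%R] <= (1 / 6)%:E)%E.
Proof.
move=> c_found e'0 ee'; set Na := count c s.
have [Na0|Na_gt0] := posnP Na.
  rewrite Na0 mulr0 (_ : [set w | _] = set0) ?measure0 ?lee_fin //.
  by apply/seteqP; split => w //=; rewrite ltNge ler0n.
pose missed w : R := (count (fun p => ~~ is_found w p && c p) s)%:R.
have missedE w :
    missed w = (count (fun p => ~~ is_found w p) [seq p <- s | c p])%:R.
  by rewrite count_filter.
have missed_ge w : Na%:R - found_count w <= missed w.
  by rewrite lerBlDl -natrD ler_nat count_le_add_predC.
have miss_prob p : p \in [seq p <- s | c p] ->
    (mu [set w | ~~ is_found w p] <= e%:E)%E.
  rewrite mem_filter => /andP[cp ps].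
  rewrite (_ : [set w | _] = ~` [set w | found store insp w p]); last first.
    by apply/seteqP; split => w /=; case: asboolP.
  rewrite probability_setC; last exact: found_meas.
  have found_fin : mu [set w | found store insp w p] \is a fin_num.
    exact/fin_num_measure/found_meas.
  by rewrite leeBlDr // addeC -leeBlDr // -EFinB c_found.
have missed_mean : (\int[mu]_w (missed w)%:E <= (Na%:R * e)%:E)%E.
  under eq_integral => w _ do rewrite missedE.
  rewrite /Na -size_filter; apply: integral_count_le miss_prob => p.
  by rewrite mem_filter => /andP[_]; exact: measurable_not_found.
have missed_meas : measurable_fun setT missed.
  rewrite (funext missedE); apply: measurable_count => p.
  by rewrite mem_filter => /andP[_]; exact: measurable_not_found.
have Na_pos : 0 < Na%:R :> R by rewrite ltr0n.
apply: le_trans (_ : mu [set w | (e' * Na%:R <= missed w)%R] <= _)%E.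
  apply: le_measure; rewrite ?inE //.
  - rewrite -[X in measurable X]setTI -preimage_itvcy.
    exact: missed_meas measurableT _ (measurable_itv _).
  - by move=> w /=; have := missed_ge w; lra.
apply: le_trans (markov_le mu _ _ _ missed_meas _ _ missed_mean) _ => //.
  exact: mulr_gt0.
rewrite lee_fin ler_pdivrMr ?mulr_gt0 //; nra.
Qed.

Lemma found_count_upper_tail (c : pred V) (K : R) : 0 < K ->
  (\int[mu]_w ((count (fun p => ~~ c p && is_found w p) s)%:R : R)%:E <= K%:E)%E ->
  (mu [set w | ((count c s)%:R + 6 * K < found_count w)%R] <= (1 / 6)%:E)%E.
Proof.
move=> K0 far_mean.
pose far w : R := (count (fun p => ~~ c p && is_found w p) s)%:R.
have far_meas : measurable_fun setT far.
  apply: measurable_count => p ps; apply: measurable_andb.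
  exact: measurable_is_found.
have far_ge w : found_count w - (count c s)%:R <= far w.
  by rewrite lerBlDl -natrD ler_nat count_le_add_predC.
apply: le_trans (_ : mu [set w | (6 * K <= far w)%R] <= _)%E.
  apply: le_measure; rewrite ?inE //.
  - rewrite -[X in measurable X]setTI -preimage_itvcy.
    exact: far_meas measurableT _ (measurable_itv _).
  - by move=> w /=; have := far_ge w; lra.
apply: le_trans (markov_le mu _ _ _ far_meas _ _ far_mean) _ => //.
  exact: mulr_gt0.
by rewrite lee_fin ler_pdivrMr ?mulr_gt0 //; lra.
Qed.

Theorem counting_answer_concentrates (ca cb : pred V) (e e' K : R) :
  (forall w p b1 b2, store w p b1 -> store w p b2 -> b1 = b2) ->
  (forall p, p \in s -> ca p ->
     ((1 - e)%:E <= mu [set w | found store insp w p])%E) ->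
  0 < e' -> 6 * e <= e' -> 0 < K ->
  (\int[mu]_w ((count (fun p => ~~ cb p && is_found w p) s)%:R : R)%:E <= K%:E)%E ->
  ((2 / 3 : R)%:E <= mu [set w |
      ((1 - e') * (count ca s)%:R)%:E <= ans_hat store insp s w /\
      ans_hat store insp s w <= ((count cb s)%:R + 6 * K)%:E])%E.
Proof.
move=> store_uniq ca_found e'0 ee' K0 far_mean.
rewrite (_ : [set w | _] =
    ~` [set w | (found_count w < (1 - e') * (count ca s)%:R)%R] `&`
    ~` [set w | ((count cb s)%:R + 6 * K < found_count w)%R]).
  rewrite (_ : 2 / 3 = 1 - (1 / 6 + 1 / 6)); last by lra.
  apply: probability_setCI_ge => //.
    exact: found_count_lower_tail ca_found e'0 ee'.
  exact: found_count_upper_tail K0 far_mean.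
apply/seteqP; split => w /=; rewrite (ans_hat_found_count (store_uniq w)) !lee_fin.
  by move=> [h1 h2]; split; apply/negP; rewrite -leNgt.
by move=> [/negP h1 /negP h2]; rewrite !leNgt.
Qed.

End counting_answer.

Section asymptotics.
Context {R : realType}.

Lemma powR_ln_div (x c : R) : 0 < c -> 1 < x -> x `^ (ln c / ln x) = c.
Proof.
move=> c0 x1; have x0 : 0 < x by apply: lt_trans x1.
by rewrite /powR gt_eqF // divfK ?gt_eqF ?ln_gt0 // lnK.
Qed.

Lemma ln_natr_cvgy : ln (n%:R : R) @[n --> \oo] --> +oo.
Proof.
apply/cvgryPge => A; near=> n.
have An : expR A < n%:R :> R by near: n; exact: nbhs_infty_gtr.
have n0 : 0 < n%:R :> R by apply: lt_trans An; exact: expR_gt0.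
by rewrite -[leLHS]expRK ler_ln ?posrE ?expR_gt0 ?ltW.
Unshelve. all: by end_near.
Qed.

Lemma cvg_div_ln_natr (c : R) : (c / ln n%:R) @[n --> \oo] --> 0.
Proof.
have ln_gt0_near : \forall n \near \oo, 0 < ln (n%:R : R).
  by move/cvgryPgt: ln_natr_cvgy; apply.
have lnV0 := proj2 (gtr0_cvgV0 ln_gt0_near) ln_natr_cvgy.
by rewrite -(mulr0 c); apply: cvgM; [exact: cvg_cst | exact: lnV0].
Qed.

End asymptotics.

Theorem lemma2 (R : realType) (alpha beta rho : R)
  (d : nat -> nat)
  (dT : nat -> measure_display) (T : forall n, measurableType (dT n))
  (P : forall n, probability (T n) R)
  (Bk : nat -> choiceType)
  (S : forall n, seq 'rV[R]_(d n))
  (store : forall n, T n -> 'rV[R]_(d n) -> Bk n -> Prop)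
  (insp : forall n, T n -> set (Bk n))
  (q : forall n, 'rV[R]_(d n)) :
  0 <= beta -> beta < alpha -> alpha < 1 ->
  (forall n, uniq (S n) /\ size (S n) = n /\ (forall p, p \in S n -> on_sphere p)) ->
  (* each point stored in at most one bucket *)
  (forall n w p b1 b2, store n w p b1 -> store n w p b2 -> b1 = b2) ->
  (forall n, on_sphere (q n)) ->
  (* the events "p lies in an inspected bucket" are events *)
  (forall n p, p \in S n -> measurable [set w | found (store n) (insp n) w p]) ->
  (* near points are found with probability 1 - o(1) *)
  (exists eps : nat -> R, eps n @[n --> \oo] --> 0 /\
     forall n p, p \in S n -> in_cap (q n) alpha p ->
       ((1 - eps n)%:E <= P n [set w | found (store n) (insp n) w p])%E) ->
  (* expected number of far points in inspected buckets is at most n^(rho+o(1)) *)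
  (exists delta : nat -> R, delta n @[n --> \oo] --> 0 /\
     forall n,
       (\int[P n]_w
          ((count (fun p => ~~ in_cap (q n) beta p &&
                             `[< found (store n) (insp n) w p >]) (S n))%:R : R)%:E
        <= ((n%:R : R) `^ (rho + delta n))%:E)%E) ->
  exists eps' delta' : nat -> R,
    eps' n @[n --> \oo] --> 0 /\ delta' n @[n --> \oo] --> 0 /\
    \forall n \near \oo,
      ((2 / 3 : R)%:E <=
       P n [set w |
         ((1 - eps' n) * (count (in_cap (q n) alpha) (S n))%:R)%:E
           <= ans_hat (store n) (insp n) (S n) w /\
         ans_hat (store n) (insp n) (S n) w
           <= ((count (in_cap (q n) beta) (S n))%:R
               + (n%:R : R) `^ (rho + delta' n))%:E])%E.
Proof.
move=> _ _ _ _ store_uniq _ found_meas [eps [eps0 near_found]] [delta [delta0 far_found]].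
(* [harmonic n] keeps eps' positive, as Markov's inequality needs a positive threshold. *)
exists (fun n => 6 * `|eps n| + harmonic n), (fun n => delta n + ln 6 / ln n%:R).
split.
  rewrite (_ : 0 = 6 * `|0 : R| + 0); last by rewrite normr0 mulr0 addr0.
  exact: cvgD (cvgM (cvg_cst _) (cvg_norm eps0)) cvg_harmonic.
split.
  by rewrite -(addr0 (0 : R)); exact: cvgD delta0 (cvg_div_ln_natr _).
near=> n.
have n_gt1 : 1 < n%:R :> R by rewrite ltr1n; near: n; exact: nbhs_infty_gt.
rewrite addrA powRD; last by apply/implyP => _; rewrite gt_eqF // (lt_trans ltr01).
rewrite powR_ln_div // [_ `^ _ * 6]mulrC.
have harmonic_pos := @harmonic_gt0 R n.
have eps_le_abs := ler_norm (eps n).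
have abs_eps_ge0 := normr_ge0 (eps n).
apply: (counting_answer_concentrates (found_meas n) _ _ _ _ _
  (store_uniq n) (near_found n) _ _ _ (far_found n)).
- lra.
- lra.
- exact/powR_gt0/(lt_trans ltr01).
Unshelve. all: by end_near.
Qed.
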